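(* For every $k\in\mathbb{N}$, the graph $\mathcal{T}_k$ has treewidth at most $k$ and contains every graph of treewidth at most $k$; that is, $\mathcal{T}_k$ is universal for the class of graphs with treewidth at most $k$.
   Context: All graphs are simple and countable; $G$ contains $H$ if $H$ is isomorphic to a subgraph of $G$. A tree-decomposition of $G$ is a family of bags $(B_x\subseteq V(G):x\in V(T))$ indexed by a tree $T$ such that every edge has both ends in some bag and, for every vertex $v$, $\{x:v\in B_x\}$ induces a nonempty subtree of $T$; its width is the maximum bag size minus one (bags bounded); treewidth is the minimum width. Let $\mathcal{T}$ be the tree whose vertices are all finite sequences $(x_1,\dots,x_n)$ with $n\ge 0$, $x_i\in\mathbb{N}$, where $(x_1,\dots,x_n)$ is adjacent to $(x_1,\dots,x_n,x_{n+1})$, rooted at the empty sequence (ancestor = prefix). Let $c:V(\mathcal{T})\to\{0,\dots,k\}$ be a colouring such that every vertex of colour $i$ has infinitely many children of each colour in $\{0,\dots,k\}\setminus\{i\}$. $\mathcal{T}_k$ is the graph on $V(\mathcal{T})$ in which $vw$ is an edge iff $v$ is a proper ancestor of $w$ and $v$ is the only vertex on the $v$–$w$ path of $\mathcal{T}$ with colour $c(v)$. *)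

From Stdlib Require Import List Arith.
Import ListNotations.

Fixpoint walk {X : Type} (R : X -> X -> Prop) (p : list X) : Prop :=
  match p with
  | x :: ((y :: _) as q) => R x y /\ walk R q
  | _ => True
  end.

Definition simple_graph {V : Type} (adj : V -> V -> Prop) : Prop :=
  (forall u v, adj u v -> adj v u) /\ (forall v, ~ adj v v).

Definition countable_type (V : Type) : Prop :=
  exists f : V -> nat, forall u v, f u = f v -> u = v.

Definition connected_on {X : Type} (R : X -> X -> Prop) (S : X -> Prop) : Prop :=
  forall x y, S x -> S y ->
    exists p, walk R (x :: p) /\ Forall S p /\ last p x = y.

Definition acyclic {X : Type} (R : X -> X -> Prop) : Prop :=
  forall x p, NoDup (x :: p) -> 2 <= length p -> walk R (x :: p) ->
    ~ R (last p x) x.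

Definition is_tree {X : Type} (R : X -> X -> Prop) : Prop :=
  inhabited X /\ simple_graph R /\ connected_on R (fun _ => True) /\ acyclic R.

Definition tree_decomposition {V X : Type} (adj : V -> V -> Prop)
    (R : X -> X -> Prop) (B : X -> V -> Prop) : Prop :=
  is_tree R /\
  (forall u v, adj u v -> exists x, B x u /\ B x v) /\
  (forall v, (exists x, B x v) /\ connected_on R (fun x => B x v)).

(* every bag has at most k+1 elements, i.e. width <= k *)
Definition bags_bounded {V X : Type} (B : X -> V -> Prop) (k : nat) : Prop :=
  forall x, exists l : list V, length l <= k + 1 /\ forall v, B x v -> In v l.

Definition treewidth_le {V : Type} (adj : V -> V -> Prop) (k : nat) : Prop :=
  exists (X : Type) (R : X -> X -> Prop) (B : X -> V -> Prop),
    tree_decomposition adj R B /\ bags_bounded B k.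

Definition contains {VG VH : Type} (adjG : VG -> VG -> Prop)
    (adjH : VH -> VH -> Prop) : Prop :=
  exists f : VH -> VG, (forall u v, f u = f v -> u = v) /\
    (forall u v, adjH u v -> adjG (f u) (f v)).

(* The tree 𝒯: vertices are finite sequences of naturals; ancestor = prefix *)
Definition prefix (v w : list nat) : Prop := exists t, w = v ++ t.
Definition proper_prefix (v w : list nat) : Prop := exists t, t <> [] /\ w = v ++ t.

(* admissible colourings c : V(𝒯) -> {0..k}: every vertex of colour i has
   infinitely many children of each colour j <> i *)
Definition good_colouring (k : nat) (c : list nat -> nat) : Prop :=
  (forall s, c s <= k) /\
  (forall s j, j <= k -> j <> c s -> forall N, exists x, N <= x /\ c (s ++ [x]) = j).

(* v w is an edge (v the ancestor): v proper ancestor of w and v is the only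
   vertex on the v-w path of 𝒯 (= prefixes u of w extending v) of colour c v *)
Definition Tk_arc (c : list nat -> nat) (v w : list nat) : Prop :=
  proper_prefix v w /\
  (forall u, prefix v u -> prefix u w -> u <> v -> c u <> c v).

Definition Tk_adj (c : list nat -> nat) (v w : list nat) : Prop :=
  Tk_arc c v w \/ Tk_arc c w v.

From Stdlib Require Import List Arith Lia Classical ClassicalEpsilon FunctionalExtensionality Permutation.
Import ListNotations.

(* Index a tree-decomposition by the tree 𝒯 itself (the
   parent/child relation on sequences) and put into the bag of w every ancestor
   v of w that *sees* w: no vertex strictly below v on the v–w path has colour
   c v.  The nodes seeing v form the subtree below v cut off at vertices of
   colour c v, hence are connected; an edge of T_k lies in the bag of its lower
   end; and distinct members of one bag have distinct colours, so a bag has at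
   most k+1 elements.

   Root a
   tree-decomposition (X, R, B) of G of width <= k at r.  Each vertex v has a
   highest bag [top_bag v]; order the vertices by the depth of their highest
   bag and then by an injective index.  The key fact [bag_of_later_top]: if u
   and w share a bag and top u is not deeper than top w, then u lies in the bag
   top w.  Hence the earlier vertices of the bag top w ("the earlier bag of w",
   at most k of them) all lie in the earlier bag of the latest one, u.  By
   well-founded recursion, map w to a child of the image of u whose colour is
   unused on the image of the earlier bag of w, choosing among the infinitely
   many children of that colour by the index of w.  By induction every vertex
   of the earlier bag of w then sees the image of w, so edges of G are mapped
   to edges of T_k, and the map is injective. *)

Lemma last_cons {A} (b : A) l d : last (b :: l) d = last l b.
Proof.
  revert b d; induction l as [|c l IH]; intros b d; [reflexivity|].
  change (last (c :: l) d = last (c :: l) b). rewrite !IH. reflexivity.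
Qed.

Lemma last_app {A} (l1 l2 : list A) d : last (l1 ++ l2) d = last l2 (last l1 d).
Proof.
  revert d; induction l1 as [|a l1 IH]; intros d; [reflexivity|].
  rewrite <- app_comm_cons, !last_cons. apply IH.
Qed.

Lemma last_in {A} (b : A) l d : In (last (b :: l) d) (b :: l).
Proof.
  revert b d; induction l as [|c l IH]; intros b d; [simpl; auto|].
  rewrite last_cons. right. apply IH.
Qed.

Lemma app_eq_app_le {A} (a b c e : list A) : a ++ b = c ++ e -> length a <= length c ->
  exists s, c = a ++ s /\ b = s ++ e.
Proof.
  revert c; induction a as [|x a IH]; intros c E Hl.
  - exists c. auto.
  - destruct c as [|y c]; simpl in Hl; [lia|].
    simpl in E. injection E; intros E2 E1; subst.
    destruct (IH c E2) as [s [H1 H2]]; [lia|]. exists s. subst. auto.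
Qed.

Lemma first_common {A} (m1 m2 : list A) : (exists z, In z m1 /\ In z m2) ->
  exists s z t, m1 = s ++ z :: t /\ In z m2 /\ (forall y, In y s -> ~ In y m2).
Proof.
  induction m1 as [|a m1 IH]; intros [z [Hz1 Hz2]]; [destruct Hz1|].
  destruct (classic (In a m2)) as [Ha|Ha].
  - exists [], a, m1. simpl. repeat split; auto.
  - destruct Hz1 as [<-|Hz1]; [contradiction|].
    destruct IH as [s [z' [t [E [I D]]]]]; [eauto|].
    exists (a :: s), z', t. subst. repeat split; auto.
    intros y [<-|Hy]; auto.
Qed.

Lemma list_max_ex {A} (le : A -> A -> Prop) (Htr : forall a b c, le a b -> le b c -> le a c)
  (Htot : forall a b, le a b \/ le b a) (l : list A) :
  l <> [] -> exists m, In m l /\ forall y, In y l -> le y m.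
Proof.
  induction l as [|a l IH]; intros Hne; [congruence|].
  destruct l as [|b l].
  - exists a. split; [left; auto|]. intros y [<-|[]]. destruct (Htot a a); auto.
  - destruct IH as [m [Hm Hmax]]; [congruence|].
    destruct (Htot a m) as [Ham|Hma].
    + exists m. split; [right; auto|]. intros y [<-|Hy]; auto.
    + exists a. split; [left; auto|]. intros y [<-|Hy]; eauto.
      destruct (Htot a a); auto.
Qed.

Lemma free_colour (l : list nat) k : length l <= k -> exists j, j <= k /\ ~ In j l.
Proof.
  intros Hl. apply NNPP. intros Hno.
  assert (Hincl : incl (seq 0 (S k)) l).
  { intros j Hj. apply in_seq in Hj. apply NNPP. intros Hn. apply Hno. exists j. split; [lia|auto]. }
  pose proof (NoDup_incl_length (seq_NoDup (S k) 0) Hincl). rewrite length_seq in *. lia.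
Qed.

Lemma filter_length_lt {A} (f : A -> bool) l w :
  In w l -> f w = false -> length (filter f l) < length l.
Proof.
  induction l as [|a l IH]; intros Hin Hf; [destruct Hin|].
  simpl. destruct Hin as [->|Hin].
  - rewrite Hf. pose proof (filter_length_le f l). simpl. lia.
  - specialize (IH Hin Hf). destruct (f a); simpl; lia.
Qed.

Lemma nat_min_ex (P : nat -> Prop) n : P n -> exists m, P m /\ forall k, P k -> m <= k.
Proof.
  revert P. induction n as [n IH] using lt_wf_ind. intros P Hn.
  destruct (classic (exists k, P k /\ k < n)) as [[k [Hk Hlt]]|Hno].
  - apply (IH k Hlt P Hk).
  - exists n. split; auto. intros k Hk. destruct (le_lt_dec n k); auto. exfalso; eauto.
Qed.

Section Walks.
Context {X : Type} (R : X -> X -> Prop).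

Lemma walk_app l1 a l2 :
  walk R (a :: l1 ++ l2) <-> walk R (a :: l1) /\ walk R (last l1 a :: l2).
Proof.
  revert a; induction l1 as [|b l1 IH]; intros a.
  - simpl. tauto.
  - rewrite last_cons, <- app_comm_cons.
    change (walk R (a :: b :: (l1 ++ l2))) with (R a b /\ walk R (b :: l1 ++ l2)).
    change (walk R (a :: b :: l1)) with (R a b /\ walk R (b :: l1)).
    rewrite IH. tauto.
Qed.

Lemma walk_snoc l a y : walk R (a :: l ++ [y]) <-> walk R (a :: l) /\ R (last l a) y.
Proof. rewrite walk_app. simpl. tauto. Qed.

Lemma walk_suffix u l : walk R (u ++ l) -> walk R l.
Proof.
  induction u as [|x u IH]; simpl; auto.
  intros W. apply IH. destruct (u ++ l); simpl in *; tauto.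
Qed.

Lemma walk_rev : (forall u v, R u v -> R v u) -> forall l, walk R l -> walk R (rev l).
Proof.
  intros Hs l. induction l as [|a l IH]; [simpl; auto|].
  intros Hw. change (rev (a :: l)) with (rev l ++ [a]).
  destruct l as [|b l]; [simpl; auto|].
  destruct Hw as [Hab Hw]. specialize (IH Hw).
  change (rev (b :: l)) with (rev l ++ [b]) in IH |- *.
  destruct (rev l ++ [b]) as [|c m] eqn:E.
  - destruct (rev l); discriminate.
  - apply (proj2 (walk_snoc m c a)). split; auto.
    rewrite <- (last_cons c m c), <- E, last_last. apply Hs; auto.
Qed.

Definition reach (S : X -> Prop) (x y : X) : Prop :=
  exists p, walk R (x :: p) /\ Forall S p /\ last p x = y.

Lemma reach_refl S x : reach S x x.
Proof. exists []. simpl. auto. Qed.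

Lemma reach_trans S x y z : reach S x y -> reach S y z -> reach S x z.
Proof.
  intros [p1 [W1 [F1 L1]]] [p2 [W2 [F2 L2]]].
  exists (p1 ++ p2). split; [|split].
  - apply walk_app. rewrite L1. auto.
  - apply Forall_app; auto.
  - rewrite last_app, L1. auto.
Qed.

Lemma reach_step S x y : R x y -> S y -> reach S x y.
Proof. intros. exists [y]. simpl. auto. Qed.

Lemma reach_mono (S S' : X -> Prop) x y :
  (forall z, S z -> S' z) -> reach S x y -> reach S' x y.
Proof. intros H [p [W [F L]]]. exists p. repeat split; auto. eapply Forall_impl; eauto. Qed.

Lemma reach_sym S x y : (forall u v, R u v -> R v u) -> S x -> reach S x y -> reach S y x.
Proof.
  intros Hs Sx [p [W [F L]]]. revert x Sx W L. induction p as [|b p IH]; intros x Sx W L.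
  - simpl in L. subst. apply reach_refl.
  - destruct W as [Rxb W]. inversion F; subst.
    apply reach_trans with b.
    + apply IH; auto. rewrite <- (last_cons b p x). auto.
    + apply reach_step; auto.
Qed.

Lemma walk_shorten p a : walk R (a :: p) ->
  exists q, walk R (a :: q) /\ NoDup (a :: q) /\ last q a = last p a /\ incl q p.
Proof.
  revert a; induction p as [|b p IH]; intros a W.
  - exists []. repeat split; auto. constructor; auto. constructor. intros x [].
  - destruct W as [Rab W]. destruct (IH b W) as [q [Wq [Nq [Lq Iq]]]].
    destruct (classic (In a (b :: q))) as [Hin|Hnin].
    + destruct (in_split _ _ Hin) as [u [v E]].
      exists v. rewrite E in Wq, Nq. split; [|split;[|split]].
      * apply (walk_suffix u). exact Wq.
      * apply (NoDup_app_remove_l u). exact Nq.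
      * rewrite last_cons, <- Lq. rewrite <- (last_cons b q b), E, last_app, last_cons. reflexivity.
      * intros y Hy. assert (In y (b :: q)) as H' by (rewrite E; apply in_or_app; right; right; auto).
        destruct H' as [<-|H']; [left; auto|right; auto].
    + exists (b :: q). split; [|split;[|split]].
      * simpl. split; auto.
      * constructor; auto.
      * rewrite !last_cons. auto.
      * intros y [<-|Hy]; [left;auto|right;auto].
Qed.

Hypothesis R_sym : forall u v, R u v -> R v u.

Lemma path_unique : acyclic R ->
  forall m1 a m2, walk R (a :: m1) -> walk R (a :: m2) -> NoDup (a :: m1) -> NoDup (a :: m2) ->
  last m1 a = last m2 a -> m1 = m2.
Proof.
  intros Hac m1. induction m1 as [|b1 n1 IH]; intros a m2 W1 W2 N1 N2 L.
  - destruct m2 as [|b2 n2]; auto. exfalso. simpl in L.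
    inversion N2; subst. apply H1. rewrite L at 1. apply last_in.
  - destruct m2 as [|b2 n2].
    + exfalso. simpl in L. inversion N1; subst. apply H1. rewrite <- L at 1. apply last_in.
    + destruct (classic (b1 = b2)) as [<-|Hne].
      { f_equal. apply (IH b1); [exact (proj2 W1)|exact (proj2 W2)|inversion N1; auto|inversion N2; auto|].
        rewrite <- (last_cons b1 n1 a), <- (last_cons b1 n2 a). auto. }
      (* The paths split at a; closing them at their first common vertex z gives a cycle. *)
      exfalso. set (m1 := b1 :: n1) in *. set (m2 := b2 :: n2) in *.
      destruct (first_common m1 m2) as [s [z [t [E1 [Iz D]]]]].
      { exists (last m1 a). split; [apply last_in|]. rewrite L. apply last_in. }
      destruct (in_split _ _ Iz) as [u [v E2]].
      inversion N1 as [|? ? Na1 N1']; subst. inversion N2 as [|? ? Na2 N2']; subst.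
      assert (Wc : walk R (a :: s ++ z :: rev u) /\ R (last (s ++ z :: rev u) a) a).
      { assert (W1' : walk R (a :: (s ++ [z]) ++ t)) by (rewrite <- app_assoc; simpl; rewrite <- E1; exact W1).
        apply walk_app in W1'. destruct W1' as [W1a _].
        assert (W2' : walk R (a :: (u ++ [z]) ++ v)) by (rewrite <- app_assoc; simpl; rewrite <- E2; exact W2).
        apply walk_app in W2'. destruct W2' as [W2a _].
        apply (walk_rev R_sym) in W2a. simpl in W2a. rewrite rev_app_distr in W2a. simpl in W2a.
        apply walk_snoc in W2a. destruct W2a as [W2b Rl].
        split.
        - replace (s ++ z :: rev u) with ((s ++ [z]) ++ rev u) by (rewrite <- app_assoc; reflexivity).
          apply walk_app. rewrite last_last. auto.
        - rewrite last_app, last_cons. auto. }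
      destruct Wc as [Wc Rc].
      apply (Hac a (s ++ z :: rev u)); auto.
      * constructor.
        -- intros H. apply in_app_or in H. destruct H as [H|[H|H]].
           ++ apply Na1. rewrite E1. apply in_or_app; auto.
           ++ apply Na1. rewrite E1. apply in_or_app; right; left; auto.
           ++ apply Na2. rewrite E2. apply in_or_app; left. apply in_rev; auto.
        -- apply NoDup_app.
           ++ rewrite E1 in N1'. apply NoDup_app_remove_r in N1'. auto.
           ++ rewrite E2 in N2'. constructor.
              ** intros H. apply (NoDup_remove_2 _ _ _ N2'). apply in_or_app. left. apply in_rev; auto.
              ** apply NoDup_rev. apply NoDup_app_remove_r in N2'. auto.
           ++ intros y Hy H. apply (D y Hy). rewrite E2. apply in_or_app.
              destruct H as [<-|H]; [right; left; auto| left; apply in_rev; auto].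
      * rewrite length_app. simpl. rewrite length_rev.
        destruct s as [|y s]; [|simpl; lia].
        destruct u as [|y u]; [|simpl; lia].
        exfalso. simpl in E1, E2. unfold m1, m2 in E1, E2.
        injection E1; injection E2; intros; subst. auto.
Qed.

(* A graph with a height function in which adjacent vertices have different
   heights and every vertex has at most one lower neighbour is acyclic: on a
   cycle, the highest vertex would have two lower neighbours. *)
Lemma acyclic_of_height (h : X -> nat)
  (Hneq : forall a b, R a b -> h a <> h b)
  (Hlower : forall a a' b, R a b -> R a' b -> h a < h b -> h a' < h b -> a = a') : acyclic R.
Proof.
  intros x p N Hlen W Rc.
  assert (CW : walk R (x :: p ++ [x])) by (apply walk_snoc; auto).
  destruct (list_max_ex (fun a b => h a <= h b) (fun a b c => Nat.le_trans (h a) (h b) (h c))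
                        (fun a b => Nat.le_ge_cases (h a) (h b)) (x :: p))
    as [m [Hm Hmax]]; [congruence|].
  destruct (in_split _ _ Hm) as [u [v E]].
  (* rotate the cycle so that it starts at its highest vertex m *)
  assert (Hrot : exists q, walk R (m :: q ++ [m]) /\ NoDup (m :: q) /\ length q = length p
                           /\ incl q (x :: p)).
  { destruct u as [|x' u'].
    - simpl in E. injection E; intros; subst. exists v. repeat split; auto. intros y Hy; right; auto.
    - simpl in E. injection E; intros E2 E1; subst x' p.
      exists (v ++ x :: u'). split; [|split; [|split]].
      + replace (x :: (u' ++ m :: v) ++ [x]) with (x :: (u' ++ [m]) ++ (v ++ [x])) in CW
          by (simpl; rewrite <- !app_assoc; reflexivity).
        apply walk_app in CW. destruct CW as [C1 C2]. rewrite last_last in C2.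
        replace (m :: (v ++ x :: u') ++ [m]) with (m :: (v ++ [x]) ++ (u' ++ [m]))
          by (rewrite <- !app_assoc; reflexivity).
        apply walk_app. split; auto. rewrite last_last. auto.
      + apply (Permutation_NoDup (l := (x :: u') ++ (m :: v))); auto.
        apply Permutation_app_comm.
      + rewrite !length_app. simpl. lia.
      + intros y Hy. apply in_app_or in Hy. destruct Hy as [Hy|[<-|Hy]]; [| left; auto|];
        right; apply in_or_app; [right; right|left]; auto. }
  destruct Hrot as [q [Wq [Nq [Lq Iq]]]].
  destruct q as [|a q']; [simpl in Lq; lia|].
  apply walk_snoc in Wq. destruct Wq as [[Rma _] Rl].
  assert (Ha : h a < h m).
  { pose proof (Hmax a (Iq a (or_introl eq_refl))). pose proof (Hneq m a Rma). lia. }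
  assert (Hb : h (last (a :: q') m) < h m).
  { pose proof (Hmax _ (Iq _ (last_in a q' m))). pose proof (Hneq _ _ Rl). lia. }
  pose proof (Hlower _ _ _ (R_sym _ _ Rma) Rl Ha Hb) as Hab.
  rewrite last_cons in Hab.
  destruct q' as [|b q'']; [simpl in Lq; lia|].
  inversion Nq; subst. inversion H2; subst. apply H3. rewrite Hab at 1. apply last_in.
Qed.

End Walks.

Section RootedTree.
Context {X : Type} (R : X -> X -> Prop) (R_sym : forall u v, R u v -> R v u)
  (R_acyclic : acyclic R) (R_connected : connected_on R (fun _ => True)) (r : X).

Definition root_path_spec (x : X) (m : list X) : Prop :=
  walk R (r :: m) /\ NoDup (r :: m) /\ last m r = x.

Lemma root_path_ex x : exists m, root_path_spec x m.
Proof.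
  destruct (R_connected r x I I) as [p [W [_ L]]].
  destruct (walk_shorten R p r W) as [q [Wq [Nq [Lq _]]]].
  exists q. unfold root_path_spec. rewrite Lq. auto.
Qed.

(* The path from the root to x (the root itself excluded) and the depth of x. *)
Definition root_path x : list X :=
  proj1_sig (constructive_indefinite_description _ (root_path_ex x)).

Definition depth x : nat := length (root_path x).

Lemma root_path_ok x : root_path_spec x (root_path x).
Proof. unfold root_path. destruct (constructive_indefinite_description _ _). auto. Qed.

Lemma root_path_unique x m : root_path_spec x m -> m = root_path x.
Proof.
  intros [W [N L]]. destruct (root_path_ok x) as [W' [N' L']].
  apply (path_unique R R_sym R_acyclic m r); auto. congruence.
Qed.

Lemma root_path_end x : last (root_path x) r = x.
Proof. apply (root_path_ok x). Qed.

Lemma root_path_inj x y : root_path x = root_path y -> x = y.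
Proof. intros E. rewrite <- (root_path_end x), <- (root_path_end y), E. reflexivity. Qed.

Lemma root_path_root : root_path r = [].
Proof.
  symmetry. apply root_path_unique.
  split; [simpl; auto|split; [repeat constructor; auto|reflexivity]].
Qed.

Lemma root_path_ancestor z x : In z (r :: root_path x) ->
  exists m2, root_path x = root_path z ++ m2.
Proof.
  intros [<-|Hz].
  - rewrite root_path_root. exists (root_path x). auto.
  - destruct (in_split _ _ Hz) as [m1 [m2 E]].
    destruct (root_path_ok x) as [W [N L]]. rewrite E in W, N.
    assert (Hz' : m1 ++ [z] = root_path z).
    { apply root_path_unique. split; [|split].
      - replace (m1 ++ z :: m2) with ((m1 ++ [z]) ++ m2) in W by (rewrite <- app_assoc; auto).
        apply walk_app in W. tauto.
      - replace (r :: m1 ++ z :: m2) with ((r :: m1 ++ [z]) ++ m2) in N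
          by (simpl; rewrite <- app_assoc; auto).
        apply NoDup_app_remove_r in N. auto.
      - apply last_last. }
    exists m2. rewrite E, <- Hz', <- app_assoc. reflexivity.
Qed.

Section HighestBag.
Context {V : Type} (B : X -> V -> Prop)
  (B_subtree : forall v, (exists x, B x v) /\ connected_on R (fun x => B x v)).

Lemma top_bag_ex v : exists t, B t v /\ forall y, B y v -> depth t <= depth y.
Proof.
  destruct (proj1 (B_subtree v)) as [x Hx].
  destruct (nat_min_ex (fun n => exists y, B y v /\ depth y = n) (depth x))
    as [m [[t [Ht Hm]] Hmin]]; eauto.
  exists t. split; auto. intros y Hy. subst. apply Hmin. eauto.
Qed.

Definition top_bag v : X := proj1_sig (constructive_indefinite_description _ (top_bag_ex v)).

Lemma top_bag_ok v : B (top_bag v) v /\ forall y, B y v -> depth (top_bag v) <= depth y.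
Proof. unfold top_bag. destruct (constructive_indefinite_description _ _). auto. Qed.

(* Every bag containing v is a descendant of the highest one, through bags containing v:
   the path inside the subtree of v from top_bag v to y meets the root path of
   top_bag v only at top_bag v itself, by minimality of its depth. *)
Lemma root_path_through_top v y : B y v ->
  exists m2, root_path y = root_path (top_bag v) ++ m2 /\ Forall (fun z => B z v) m2.
Proof.
  intros Hy. destruct (top_bag_ok v) as [Ht Hmin]. set (t := top_bag v) in *.
  destruct (proj2 (B_subtree v) t y Ht Hy) as [p [W [F L]]].
  destruct (walk_shorten R p t W) as [q [Wq [Nq [Lq Iq]]]].
  assert (Fq : Forall (fun z => B z v) q).
  { apply Forall_forall. intros z Hz. apply (proj1 (Forall_forall _ _) F). auto. }
  destruct (classic (exists z, In z (r :: root_path t) /\ In z q)) as [[z [Hz1 Hz2]]|Hno].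
  - exfalso. destruct (root_path_ancestor z t Hz1) as [m2 E].
    assert (Bz : B z v) by (apply (proj1 (Forall_forall _ _) Fq); auto).
    destruct m2 as [|a m2].
    + rewrite app_nil_r in E. apply root_path_inj in E. subst. inversion Nq; auto.
    + specialize (Hmin z Bz). unfold depth in Hmin. rewrite E, length_app in Hmin. simpl in Hmin. lia.
  - exists q. split; auto. symmetry. apply root_path_unique. destruct (root_path_ok t) as [W' [N' L']].
    split; [|split].
    + apply walk_app. rewrite L'. auto.
    + change (NoDup ((r :: root_path t) ++ q)). apply NoDup_app; auto.
      * inversion Nq; auto.
      * intros a Ha Hq. apply Hno. eauto.
    + rewrite last_app, L'. rewrite Lq. auto.
Qed.

Lemma bag_of_later_top x u w :
  B x u -> B x w -> depth (top_bag u) <= depth (top_bag w) -> B (top_bag w) u.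
Proof.
  intros Hu Hw Hle.
  destruct (root_path_through_top u x Hu) as [mu [Eu Fu]].
  destruct (root_path_through_top w x Hw) as [mw [Ew Fw]].
  rewrite Ew in Eu. destruct (app_eq_app_le _ _ _ _ (eq_sym Eu) Hle) as [s [E1 E2]].
  destruct s as [|a s].
  - rewrite app_nil_r in E1. apply root_path_inj in E1. rewrite E1. apply top_bag_ok.
  - rewrite <- (root_path_end (top_bag w)), E1, last_app.
    apply (proj1 (Forall_forall _ _) Fu). rewrite E2. apply in_or_app. left. apply last_in.
Qed.

End HighestBag.
End RootedTree.

Lemma prefix_refl (v : list nat) : prefix v v.
Proof. exists []. rewrite app_nil_r. auto. Qed.

Lemma prefix_trans (a b d : list nat) : prefix a b -> prefix b d -> prefix a d.
Proof. intros [t1 ->] [t2 ->]. exists (t1 ++ t2). rewrite app_assoc. auto. Qed.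

Lemma prefix_antisym (u v : list nat) : prefix u v -> prefix v u -> u = v.
Proof.
  intros [t1 E1] [t2 E2]. subst. rewrite <- app_assoc in E2.
  assert (Hl : length (t1 ++ t2) = 0).
  { apply (f_equal (@length nat)) in E2. rewrite length_app in E2. lia. }
  destruct t1; [rewrite app_nil_r; auto|simpl in Hl; lia].
Qed.

Lemma prefix_snoc_inv u p (x : nat) : prefix u (p ++ [x]) -> u = p ++ [x] \/ prefix u p.
Proof.
  intros [t E]. destruct t as [|z t0] eqn:Et; [left; rewrite app_nil_r in E; auto|].
  destruct (exists_last (l:=z :: t0) ltac:(congruence)) as [t' [y Ey]]. rewrite Ey in E.
  right. rewrite app_assoc in E. apply app_inj_tail in E. destruct E as [E _]. exists t'. auto.
Qed.

Lemma prefix_total u1 u2 w : prefix u1 w -> prefix u2 w -> prefix u1 u2 \/ prefix u2 u1.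
Proof.
  intros [t1 E1] [t2 E2]. rewrite E1 in E2.
  destruct (le_lt_dec (length u1) (length u2)).
  - left. destruct (app_eq_app_le _ _ _ _ E2 l) as [s [H _]]. exists s. auto.
  - right. destruct (app_eq_app_le _ _ _ _ (eq_sym E2) ltac:(lia)) as [s [H _]]. exists s. auto.
Qed.

Fixpoint prefixes (w : list nat) : list (list nat) :=
  match w with
  | [] => [[]]
  | a :: w => [] :: map (cons a) (prefixes w)
  end.

Lemma prefixes_complete u w : prefix u w -> In u (prefixes w).
Proof.
  revert u; induction w as [|a w IH]; intros u [t E].
  - destruct u; [left; auto|discriminate].
  - destruct u as [|b u]; [left; auto|]. simpl in E. injection E; intros E2 E1; subst.
    right. apply in_map. apply IH. exists t. auto.
Qed.

(* [sees c v w]: v is an ancestor of w (possibly w itself) and no vertex strictly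
   below v on the v–w path has colour c v.  For v <> w this is exactly [Tk_arc]. *)
Definition sees (c : list nat -> nat) (v w : list nat) : Prop :=
  prefix v w /\ forall u, prefix v u -> prefix u w -> u <> v -> c u <> c v.

Lemma sees_refl c v : sees c v v.
Proof.
  split; [apply prefix_refl|]. intros u H1 H2 H3. exfalso. apply H3. apply prefix_antisym; auto.
Qed.

Lemma sees_snoc c v p x : sees c v p -> c (p ++ [x]) <> c v -> sees c v (p ++ [x]).
Proof.
  intros [[t E] H] Hc. split.
  - exists (t ++ [x]). subst. rewrite app_assoc. auto.
  - intros u H1 H2 H3. destruct (prefix_snoc_inv _ _ _ H2) as [->|H2']; auto.
Qed.

Lemma sees_arc c v w : sees c v w -> v <> w -> Tk_arc c v w.
Proof.
  intros [[t E] H] Hne. split; auto. exists t. split; auto.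
  intros ->. apply Hne. rewrite E, app_nil_r. auto.
Qed.

Lemma arc_sees c v w : Tk_arc c v w -> sees c v w.
Proof. intros [[t [_ E]] H]. split; auto. exists t; auto. Qed.

Lemma sees_colour_inj c w u1 u2 : sees c u1 w -> sees c u2 w -> c u1 = c u2 -> u1 = u2.
Proof.
  intros H1 H2 E. destruct (prefix_total u1 u2 w (proj1 H1) (proj1 H2)) as [P|P].
  - apply NNPP. intros Hne. apply (proj2 H1 u2 P (proj1 H2)); auto.
  - apply NNPP. intros Hne. apply (proj2 H2 u1 P (proj1 H1)); auto.
Qed.

Definition child_adj (a b : list nat) : Prop := (exists x, b = a ++ [x]) \/ (exists x, a = b ++ [x]).

Lemma child_adj_sym a b : child_adj a b -> child_adj b a.
Proof. unfold child_adj. tauto. Qed.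

Lemma reach_down v t :
  reach child_adj (fun u => prefix v u /\ prefix u (v ++ t)) v (v ++ t).
Proof.
  induction t as [|x t IH] using rev_ind.
  - rewrite app_nil_r. apply reach_refl.
  - apply reach_trans with (v ++ t).
    + eapply reach_mono; [|exact IH]. intros z [H1 H2]. split; auto.
      eapply prefix_trans; [exact H2|]. exists [x]. rewrite app_assoc. auto.
    + apply reach_step.
      * left. exists x. rewrite app_assoc. auto.
      * split; [exists (t ++ [x]); auto|apply prefix_refl].
Qed.

Lemma child_adj_tree : is_tree child_adj.
Proof.
  split; [constructor; exact []|]. split; [split|split].
  - apply child_adj_sym.
  - intros v [[x E]|[x E]]; apply (f_equal (@length nat)) in E; rewrite length_app in E; simpl in E; lia.
  - intros x y _ _. change (reach child_adj (fun _ => True) x y).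
    apply reach_trans with ([] : list nat).
    + apply reach_sym; auto. exact child_adj_sym. eapply reach_mono; [|apply (reach_down [] x)]. auto.
    + eapply reach_mono; [|apply (reach_down [] y)]. auto.
  - (* the height is the length; the only lower neighbour is the parent *)
    apply (acyclic_of_height child_adj child_adj_sym (@length nat)).
    + intros a b [[x E]|[x E]]; subst; rewrite length_app; simpl; lia.
    + intros a a' b [[x E]|[x E]] [[x' E']|[x' E']] H1 H2; subst;
      rewrite ?length_app in *; simpl in *; try lia.
      apply app_inj_tail in E'. tauto.
Qed.

Theorem Tk_treewidth k c : good_colouring k c -> treewidth_le (Tk_adj c) k.
Proof.
  intros [Hk _]. exists (list nat), child_adj, (fun w v => sees c v w).
  split; [split; [|split]|].
  - apply child_adj_tree.
  - intros u v [H|H].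
    + exists v. split; [apply arc_sees; auto|apply sees_refl].
    + exists u. split; [apply sees_refl|apply arc_sees; auto].
  - intros v. split; [exists v; apply sees_refl|].
    assert (Hdown : forall w, sees c v w -> reach child_adj (fun x => sees c v x) v w).
    { intros w [[t E] Hw]. subst w. eapply reach_mono; [|apply (reach_down v t)].
      intros z [P1 P2]. split; auto. intros u Q1 Q2 Q3. apply Hw; auto. eapply prefix_trans; eauto. }
    intros x y Hx Hy. change (reach child_adj (fun x => sees c v x) x y).
    apply reach_trans with v; [|apply Hdown; auto].
    apply reach_sym; [exact child_adj_sym|exact (sees_refl c v)|]. apply Hdown; auto.
  - intros w.
    set (l := nodup (list_eq_dec Nat.eq_dec)
                (filter (fun u => if excluded_middle_informative (sees c u w) then true else false)
                        (prefixes w))).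
    assert (Hl : forall u, In u l <-> sees c u w).
    { intros u. unfold l. rewrite nodup_In, filter_In.
      destruct excluded_middle_informative as [H|H]; split; try tauto.
      - intros _. split; auto. apply prefixes_complete. apply H.
      - intros [_ E]; discriminate. }
    exists l. split; [|intros v; apply Hl].
    (* the colours of the bag are distinct values in {0..k} *)
    assert (ND : NoDup (map c l)).
    { apply NoDup_map_NoDup_ForallPairs; [|apply NoDup_nodup].
      intros a b Ha Hb E. apply (sees_colour_inj c w); auto; apply Hl; auto. }
    assert (IN : incl (map c l) (seq 0 (S k))).
    { intros j Hj. apply in_map_iff in Hj. destruct Hj as [u [<- _]]. apply in_seq. specialize (Hk u). lia. }
    pose proof (NoDup_incl_length ND IN). rewrite length_map, length_seq in *. lia.
Qed.

(* Children of p of colour j: an injective enumeration, available whenever p has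
   infinitely many children of colour j. *)
Section ChildrenOfColour.
Context (c : list nat -> nat).

Definition child_from (p : list nat) (j N : nat) : nat :=
  match excluded_middle_informative (exists x, N <= x /\ c (p ++ [x]) = j) with
  | left H => proj1_sig (constructive_indefinite_description _ H)
  | right _ => N
  end.

Lemma child_from_ge p j N : N <= child_from p j N.
Proof.
  unfold child_from. destruct excluded_middle_informative as [H|H]; auto.
  destruct (constructive_indefinite_description _ H) as [x Hx]. simpl. apply Hx.
Qed.

Lemma child_from_colour p j N :
  (exists x, N <= x /\ c (p ++ [x]) = j) -> c (p ++ [child_from p j N]) = j.
Proof.
  intros Hex. unfold child_from. destruct excluded_middle_informative as [H|H]; [|contradiction].
  destruct (constructive_indefinite_description _ H) as [x Hx]. simpl. apply Hx.
Qed.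

Fixpoint child_enum (p : list nat) (j n : nat) : nat :=
  match n with
  | 0 => child_from p j 0
  | S n => child_from p j (S (child_enum p j n))
  end.

Lemma child_enum_mono p j n m : n < m -> child_enum p j n < child_enum p j m.
Proof.
  induction m as [|m IH]; intros H; [lia|].
  simpl. pose proof (child_from_ge p j (S (child_enum p j m))).
  destruct (Nat.eq_dec n m) as [->|Hne]; [lia|]. specialize (IH ltac:(lia)). lia.
Qed.

Lemma child_enum_inj p j n m : child_enum p j n = child_enum p j m -> n = m.
Proof.
  intros E. destruct (lt_eq_lt_dec n m) as [[H|H]|H]; auto;
  apply (child_enum_mono p j) in H; lia.
Qed.

Lemma child_enum_colour p j n :
  (forall N, exists x, N <= x /\ c (p ++ [x]) = j) -> c (p ++ [child_enum p j n]) = j.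
Proof. intros H. destruct n; simpl; apply child_from_colour; auto. Qed.

End ChildrenOfColour.

Section Embedding.
Context (k : nat) (c : list nat -> nat) (Hc : good_colouring k c)
  {V : Type} (adj : V -> V -> Prop) (adj_simple : simple_graph adj)
  (idx : V -> nat) (idx_inj : forall u v, idx u = idx v -> u = v)
  {X : Type} (R : X -> X -> Prop) (R_sym : forall u v, R u v -> R v u) (R_acyclic : acyclic R)
  (R_connected : connected_on R (fun _ => True)) (r : X)
  (B : X -> V -> Prop) (B_subtree : forall v, (exists x, B x v) /\ connected_on R (fun x => B x v))
  (B_edge : forall u v, adj u v -> exists x, B x u /\ B x v)
  (B_bounded : bags_bounded B k).

Definition top v : X := top_bag R R_connected r B B_subtree v.
Definition top_depth v : nat := depth R R_connected r (top v).

Lemma top_absorbs x u w :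
  B x u -> B x w -> top_depth u <= top_depth w -> B (top w) u.
Proof. apply (bag_of_later_top R R_sym R_acyclic R_connected r B B_subtree). Qed.

Definition rank_lt u w : Prop :=
  top_depth u < top_depth w \/ (top_depth u = top_depth w /\ idx u < idx w).

Lemma rank_lt_wf : well_founded rank_lt.
Proof.
  assert (Hacc : forall n m w, top_depth w = n -> idx w = m -> Acc rank_lt w).
  { induction n as [n IHn] using lt_wf_ind. intros m.
    induction m as [m IHm] using lt_wf_ind. intros w E1 E2.
    constructor. intros u [H|[H1 H2]]; subst; eauto. }
  intros w. eauto.
Qed.

Lemma rank_lt_irrefl a : ~ rank_lt a a.
Proof. unfold rank_lt. lia. Qed.

Lemma rank_lt_total a b : a = b \/ rank_lt a b \/ rank_lt b a.
Proof.
  unfold rank_lt. destruct (lt_eq_lt_dec (top_depth a) (top_depth b)) as [[H|H]|H]; [tauto| |tauto].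
  destruct (lt_eq_lt_dec (idx a) (idx b)) as [[H'|H']|H'];
    [tauto|left; apply idx_inj; auto|right; right; right; split; [symmetry|]; auto].
Qed.

Definition bag_list x : list V :=
  proj1_sig (constructive_indefinite_description _ (B_bounded x)).

Lemma bag_list_ok x : length (bag_list x) <= k + 1 /\ forall v, B x v -> In v (bag_list x).
Proof. unfold bag_list. destruct (constructive_indefinite_description _ _) as [l Hl]. auto. Qed.

Definition earlier_bag w : list V :=
  filter (fun u => if excluded_middle_informative (B (top w) u /\ rank_lt u w) then true else false)
         (bag_list (top w)).

Lemma earlier_bag_spec w u : In u (earlier_bag w) <-> B (top w) u /\ rank_lt u w.
Proof.
  unfold earlier_bag. rewrite filter_In.
  destruct excluded_middle_informative as [H|H]; split; try tauto.
  - intros H'. split; auto. apply bag_list_ok. tauto.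
  - intros [_ E]; discriminate.
Qed.

Lemma top_contains w : B (top w) w.
Proof. apply (top_bag_ok R R_connected r B B_subtree w). Qed.

(* w itself is in its highest bag but not in its earlier bag. *)
Lemma earlier_bag_length w : length (earlier_bag w) <= k.
Proof.
  pose proof (proj1 (bag_list_ok (top w))).
  enough (length (earlier_bag w) < length (bag_list (top w))) by lia.
  apply filter_length_lt with w.
  - apply bag_list_ok. apply top_contains.
  - destruct excluded_middle_informative as [[_ H']|_]; auto. exfalso. apply (rank_lt_irrefl w). auto.
Qed.

Definition latest w u : Prop :=
  In u (earlier_bag w) /\ forall u', In u' (earlier_bag w) -> u' = u \/ rank_lt u' u.

Lemma latest_ex w : earlier_bag w <> [] -> exists u, latest w u.
Proof.
  apply list_max_ex.
  - intros a b d [->|Hab] [->|Hbd]; auto; right; unfold rank_lt in *; lia.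
  - intros a b. destruct (rank_lt_total a b) as [->|[H|H]]; auto.
Qed.

Lemma earlier_bag_of_latest w u u' :
  latest w u -> In u' (earlier_bag w) -> u' <> u -> In u' (earlier_bag u).
Proof.
  intros [Hu Hmax] Hu' Hne. destruct (Hmax u' Hu') as [->|Hlt]; [congruence|].
  apply earlier_bag_spec. split; auto.
  apply earlier_bag_spec in Hu. apply earlier_bag_spec in Hu'.
  apply (top_absorbs (top w) u' u); try tauto. unfold rank_lt in Hlt. lia.
Qed.

Definition fresh_colour w (g : V -> list nat) : nat :=
  match excluded_middle_informative
          (exists j, j <= k /\ ~ In j (map (fun u => c (g u)) (earlier_bag w))) with
  | left H => proj1_sig (constructive_indefinite_description _ H)
  | right _ => 0
  end.

Lemma fresh_colour_ok w g :
  fresh_colour w g <= k /\ ~ In (fresh_colour w g) (map (fun u => c (g u)) (earlier_bag w)).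
Proof.
  unfold fresh_colour. destruct excluded_middle_informative as [H|H].
  - destruct (constructive_indefinite_description _ H) as [j Hj]. simpl. auto.
  - exfalso. apply H. apply free_colour. rewrite length_map. apply earlier_bag_length.
Qed.

Definition embed_step w (g : V -> list nat) : list nat :=
  match excluded_middle_informative (exists u, latest w u) with
  | left H => let u := proj1_sig (constructive_indefinite_description _ H) in
              g u ++ [child_enum c (g u) (fresh_colour w g) (idx w)]
  | right _ => [idx w]
  end.

Definition embed : V -> list nat :=
  Fix rank_lt_wf (fun _ => list nat)
    (fun w rec => embed_step w (fun u => match excluded_middle_informative (rank_lt u w) with
                                         | left H => rec u H | right _ => [] end)).

Definition embed_before w u : list nat :=
  match excluded_middle_informative (rank_lt u w) with left _ => embed u | right _ => [] end.

Lemma embed_unfold w : embed w = embed_step w (embed_before w).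
Proof.
  unfold embed. rewrite Fix_eq; [reflexivity|].
  intros x f1 f2 Hf. f_equal. apply functional_extensionality. intros u.
  destruct excluded_middle_informative; auto.
Qed.

Lemma embed_before_lt w u : rank_lt u w -> embed_before w u = embed u.
Proof. intros H. unfold embed_before. destruct excluded_middle_informative; tauto. Qed.

Lemma embed_shape w :
  (earlier_bag w = [] /\ embed w = [idx w]) \/
  (exists u j, latest w u /\ j <= k /\ ~ In j (map (fun u' => c (embed u')) (earlier_bag w)) /\
     embed w = embed u ++ [child_enum c (embed u) j (idx w)] /\
     c (embed u ++ [child_enum c (embed u) j (idx w)]) = j).
Proof.
  rewrite embed_unfold. unfold embed_step. destruct excluded_middle_informative as [H|H].
  - right. destruct (constructive_indefinite_description _ H) as [u Hu]. simpl.
    assert (Hlt : rank_lt u w) by (apply earlier_bag_spec; apply Hu).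
    assert (Hmap : map (fun u' => c (embed_before w u')) (earlier_bag w)
                   = map (fun u' => c (embed u')) (earlier_bag w)).
    { apply map_ext_in. intros a Ha. rewrite embed_before_lt; auto. apply earlier_bag_spec in Ha. tauto. }
    destruct (fresh_colour_ok w (embed_before w)) as [C1 C2]. rewrite Hmap in C2.
    rewrite embed_before_lt; auto.
    exists u, (fresh_colour w (embed_before w)). do 4 (split; [auto|]).
    (* the colour differs from that of embed u, which has infinitely many children of it *)
    apply child_enum_colour. intros N. apply (proj2 Hc); auto.
    intros E. apply C2. rewrite E. apply in_map_iff. exists u. split; auto. apply Hu.
  - left. split; auto. destruct (earlier_bag w) eqn:E; auto.
    exfalso. apply H. apply latest_ex. rewrite E. congruence.
Qed.

Lemma embed_sees w : forall u, In u (earlier_bag w) -> sees c (embed u) (embed w).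
Proof.
  induction w as [w IH] using (well_founded_ind rank_lt_wf).
  intros u' Hu'. destruct (embed_shape w) as [[E _]|[u [j [Hm [Hj [Hn [E Hcol]]]]]]].
  - rewrite E in Hu'. destruct Hu'.
  - rewrite E. apply sees_snoc.
    + destruct (classic (u' = u)) as [->|Hne]; [apply sees_refl|].
      apply IH; [apply earlier_bag_spec; apply Hm|]. apply (earlier_bag_of_latest w); auto.
    + rewrite Hcol. intros Ej. apply Hn. rewrite Ej. apply (in_map (fun u0 => c (embed u0))). auto.
Qed.

Lemma embed_nonempty w : embed w <> [].
Proof.
  destruct (embed_shape w) as [[_ E]|[u [j [_ [_ [_ [E _]]]]]]]; rewrite E; [congruence|].
  intros H. apply app_eq_nil in H. destruct H; congruence.
Qed.

(* Injectivity: the last entry and colour of embed w determine idx w. *)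
Lemma embed_inj w1 w2 : embed w1 = embed w2 -> w1 = w2.
Proof.
  intros H.
  destruct (embed_shape w1) as [[_ E1]|[u1 [j1 [_ [_ [_ [E1 C1]]]]]]];
  destruct (embed_shape w2) as [[_ E2]|[u2 [j2 [_ [_ [_ [E2 C2]]]]]]]; rewrite E1, E2 in H.
  - injection H. apply idx_inj.
  - exfalso. apply (f_equal (@length nat)) in H. rewrite length_app in H. simpl in H.
    pose proof (embed_nonempty u2). destruct (embed u2); simpl in *; [congruence|lia].
  - exfalso. apply (f_equal (@length nat)) in H. rewrite length_app in H. simpl in H.
    pose proof (embed_nonempty u1). destruct (embed u1); simpl in *; [congruence|lia].
  - apply app_inj_tail in H. destruct H as [Hp Hx]. rewrite Hp in C1, Hx.
    rewrite Hx in C1. rewrite C1 in C2. subst j2.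
    apply child_enum_inj in Hx. apply idx_inj. auto.
Qed.

(* Each edge uw of G joins the images: the earlier endpoint lies in the earlier bag of the later one. *)
Lemma embed_edge u w : adj u w -> Tk_adj c (embed u) (embed w).
Proof.
  intros Ha. assert (Hne : u <> w) by (intros ->; apply (proj2 adj_simple w); auto).
  destruct (B_edge u w Ha) as [x [Bu Bw]].
  assert (Hne' : embed u <> embed w) by (intros E; apply Hne; apply embed_inj; auto).
  destruct (rank_lt_total u w) as [->|[Hl|Hl]]; [congruence| |].
  - left. apply sees_arc; auto. apply embed_sees. apply earlier_bag_spec. split; auto.
    apply (top_absorbs x u w); auto. unfold rank_lt in Hl. lia.
  - right. apply sees_arc; auto. apply embed_sees. apply earlier_bag_spec. split; auto.
    apply (top_absorbs x w u); auto. unfold rank_lt in Hl. lia.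
Qed.

Lemma Tk_contains : contains (Tk_adj c) adj.
Proof. exists embed. split; [exact embed_inj|exact embed_edge]. Qed.

End Embedding.

Theorem mainTheorem11 :
  forall (k : nat) (c : list nat -> nat), good_colouring k c ->
    treewidth_le (Tk_adj c) k /\
    (forall (V : Type) (adj : V -> V -> Prop),
        simple_graph adj -> countable_type V -> treewidth_le adj k ->
        contains (Tk_adj c) adj).
Proof.
  intros k c Hc. split; [exact (Tk_treewidth k c Hc)|].
  intros V adj Hsimple [idx Hidx] [X [R [B [[Htree [Hedge Hbag]] Hbounded]]]].
  destruct Htree as [[r] [[Hsym _] [Hconn Hacyc]]].
  exact (Tk_contains k c Hc adj Hsimple idx Hidx R Hsym Hacyc Hconn r B Hbag Hedge Hbounded).
Qed.
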